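(* Let $(\Phi,\Gamma,D)$ be a domain-free s-continuous information algebra. Then for every $\phi\in\Phi$ and every $x\in D$, the set $\{\psi\in\Gamma:\ \psi^{\Rightarrow x}=\psi\ll\phi\}$ is directed. Similarly, if $(\Phi,\Gamma,D)$ is a domain-free continuous information algebra, then for every $\phi\in\Phi$ the set $\{\psi\in\Gamma:\ \psi\ll\phi\}$ is directed.
   Context: A domain-free information algebra $(\Phi,D)$ consists of a set $\Phi$, a lattice $D$, a combination $\otimes:\Phi\times\Phi\to\Phi$ and a focusing $\Phi\times D\to\Phi$, $(\psi,x)\mapsto\psi^{\Rightarrow x}$, such that: (1) $\otimes$ is associative and commutative and has a neutral element $e$ (the empty information); (2) $(\psi^{\Rightarrow y})^{\Rightarrow x}=\psi^{\Rightarrow x\wedge y}$ for all $\psi,x,y$; (3) $(\phi^{\Rightarrow x}\otimes\psi)^{\Rightarrow x}=\phi^{\Rightarrow x}\otimes\psi^{\Rightarrow x}$; (4) for every $\psi$ there is $x\in D$ with $\psi^{\Rightarrow x}=\psi$; (5) $\psi\otimes\psi^{\Rightarrow x}=\psi$. $\Phi$ is partially ordered by $\psi\le\phi$ iff $\psi\otimes\phi=\phi$; all suprema $\vee$ are taken with respect to this order. In a poset, $a\ll b$ ($a$ way-below $b$) means: for every directed set $X$ with $b\le\vee X$ there is $c\in X$ with $a\le c$. A domain-free continuous (resp. s-continuous) information algebra is a triple $(\Phi,\Gamma,D)$ where $(\Phi,D)$ is a domain-free information algebra, $D$ has a top element, $\Gamma\subseteq\Phi$ is closed under combination and contains $e$,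 and: (convergency) every directed $X\subseteq\Gamma$ has a supremum $\vee X$ in $\Phi$; (density) $\phi=\vee\{\psi\in\Gamma:\psi\ll\phi\}$ for all $\phi\in\Phi$ (resp. (strong density) $\phi^{\Rightarrow x}=\vee\{\psi\in\Gamma:\psi=\psi^{\Rightarrow x}\ll\phi\}$ for all $\phi\in\Phi$, $x\in D$). *)

From HB Require Import structures.
From mathcomp Require Import all_boot all_order.
Set Implicit Arguments. Unset Strict Implicit. Unset Printing Implicit Defensive.
Import Order.TTheory.
Local Open Scope order_scope.

Section InfoAlgebra.
Context {d : Order.disp_t} (D : latticeType d) (Phi : Type)
  (comb : Phi -> Phi -> Phi) (e : Phi) (foc : Phi -> D -> Phi).

Definition info_algebra : Prop :=
  [/\ (forall a b c, comb a (comb b c) = comb (comb a b) c),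
      (forall a b, comb a b = comb b a) & (forall a, comb e a = a)] /\
  [/\ (forall psi x y, foc (foc psi y) x = foc psi (x `&` y)),
      (forall phi psi x,
         foc (comb (foc phi x) psi) x = comb (foc phi x) (foc psi x)),
      (forall psi, exists x, foc psi x = psi)
    & (forall psi x, comb psi (foc psi x) = psi)].

Definition ile (psi phi : Phi) : Prop := comb psi phi = phi.

Definition is_sup (X : Phi -> Prop) (s : Phi) : Prop :=
  (forall a, X a -> ile a s) /\ (forall u, (forall a, X a -> ile a u) -> ile s u).

Definition directed (X : Phi -> Prop) : Prop :=
  (exists a, X a) /\
  (forall a b, X a -> X b -> exists c, [/\ X c, ile a c & ile b c]).

Definition way_below (a b : Phi) : Prop :=
  forall X : Phi -> Prop, directed X ->
  forall s, is_sup X s -> ile b s -> exists c, X c /\ ile a c.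

Definition convergency (Gamma : Phi -> Prop) : Prop :=
  forall X : Phi -> Prop, directed X -> (forall a, X a -> Gamma a) ->
  exists s, is_sup X s.

Definition density (Gamma : Phi -> Prop) : Prop :=
  forall phi, is_sup (fun psi => Gamma psi /\ way_below psi phi) phi.

Definition strong_density (Gamma : Phi -> Prop) : Prop :=
  forall phi x,
    is_sup (fun psi => Gamma psi /\ foc psi x = psi /\ way_below psi phi) (foc phi x).

Definition gamma_closed (Gamma : Phi -> Prop) : Prop :=
  (forall a b, Gamma a -> Gamma b -> Gamma (comb a b)) /\ Gamma e.

End InfoAlgebra.

(* (Phi, Gamma, D) domain-free continuous / s-continuous information algebra;
   D is required to have a top element, hence D : tLatticeType. *)
Definition continuous_info_algebra {d : Order.disp_t} (D : tLatticeType d)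
  (Phi : Type) (comb : Phi -> Phi -> Phi) (e : Phi) (foc : Phi -> D -> Phi)
  (Gamma : Phi -> Prop) : Prop :=
  [/\ info_algebra comb e foc, gamma_closed comb e Gamma,
      convergency comb Gamma & density comb Gamma].

Definition s_continuous_info_algebra {d : Order.disp_t} (D : tLatticeType d)
  (Phi : Type) (comb : Phi -> Phi -> Phi) (e : Phi) (foc : Phi -> D -> Phi)
  (Gamma : Phi -> Prop) : Prop :=
  [/\ info_algebra comb e foc, gamma_closed comb e Gamma,
      convergency comb Gamma & strong_density comb foc Gamma].

(* A subset of an idempotent commutative monoid that contains the neutral
   element and is closed under combination is directed, the combination of two
   members being an upper bound for both.  Both sets of the statement are of
   this kind: way-below elements of a fixed phi contain e and are closed under
   combination, and so are the elements of Gamma and the x-focused elements. *)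

From mathcomp Require Import all_boot all_order.

Set Implicit Arguments.
Unset Strict Implicit.
Unset Printing Implicit Defensive.

Section IdempotentMonoid.
Variables (Phi : Type) (comb : Phi -> Phi -> Phi) (e : Phi).
Hypotheses (combA : forall a b c, comb a (comb b c) = comb (comb a b) c)
  (combC : forall a b, comb a b = comb b a) (comb1 : forall a, comb e a = a)
  (combxx : forall a, comb a a = a).

Lemma ile_trans a b c : ile comb a b -> ile comb b c -> ile comb a c.
Proof. by rewrite /ile => hab hbc; rewrite -hbc combA hab. Qed.

Lemma ile_combl a b : ile comb a (comb a b).
Proof. by rewrite /ile combA combxx. Qed.

Lemma ile_combr a b : ile comb b (comb a b).
Proof. by rewrite combC; apply: ile_combl. Qed.

Lemma comb_ile a b c : ile comb a c -> ile comb b c -> ile comb (comb a b) c.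
Proof. by rewrite /ile => hac hbc; rewrite -combA hbc. Qed.

Lemma directed_comb_closed (P : Phi -> Prop) :
  P e -> (forall a b, P a -> P b -> P (comb a b)) -> directed comb P.
Proof.
move=> Pe Pcomb; split; first by exists e.
move=> a b Pa Pb; exists (comb a b).
by split; [apply: Pcomb | apply: ile_combl | apply: ile_combr].
Qed.

Lemma way_below_e phi : way_below comb e phi.
Proof. by move=> X [[c Xc] _] s _ _; exists c; split; last apply: comb1. Qed.

Lemma way_below_comb a b phi :
  way_below comb a phi -> way_below comb b phi -> way_below comb (comb a b) phi.
Proof.
move=> wa wb X dX s supX le_phi_s.
have [ca [Xca le_a]] := wa X dX s supX le_phi_s.
have [cb [Xcb le_b]] := wb X dX s supX le_phi_s.
have [c [Xc le_ca le_cb]] := dX.2 ca cb Xca Xcb.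
exists c; split=> //.
by apply: comb_ile; [apply: ile_trans le_ca | apply: ile_trans le_cb].
Qed.

End IdempotentMonoid.

Section InfoAlgebra.
Context {d : Order.disp_t} (D : latticeType d) (Phi : Type)
  (comb : Phi -> Phi -> Phi) (e : Phi) (foc : Phi -> D -> Phi).
Hypothesis infoA : info_algebra comb e foc.

(* Axiom (4) gives a focus of [a] equal to [a]; axiom (5) for it reads [comb a a = a]. *)
Lemma info_combxx a : comb a a = a.
Proof.
have [_ [_ _ supported comb_foc]] := infoA.
by have [x fax] := supported a; have := comb_foc a x; rewrite fax.
Qed.

Lemma foc_e x : foc e x = e.
Proof.
have [[_ _ comb1] [_ _ _ comb_foc]] := infoA.
by have := comb_foc e x; rewrite comb1.
Qed.

Lemma foc_comb_fixed a b x :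
  foc a x = a -> foc b x = b -> foc (comb a b) x = comb a b.
Proof.
have [_ [_ foc_comb _ _]] := infoA.
by move=> fa fb; have := foc_comb a b x; rewrite fa fb.
Qed.

Lemma info_directed_comb_closed (P : Phi -> Prop) :
  P e -> (forall a b, P a -> P b -> P (comb a b)) -> directed comb P.
Proof.
have [[combA combC _] _] := infoA.
exact: directed_comb_closed combA combC info_combxx P.
Qed.

Lemma info_way_below_e phi : way_below comb e phi.
Proof. by have [[_ _ comb1] _] := infoA; apply: way_below_e. Qed.

Lemma info_way_below_comb a b phi :
  way_below comb a phi -> way_below comb b phi -> way_below comb (comb a b) phi.
Proof.
have [[combA _ _] _] := infoA.
exact: way_below_comb.
Qed.

End InfoAlgebra.

Theorem proposition3p5 :
  (forall (d : Order.disp_t) (D : tLatticeType d) (Phi : Type)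
     (comb : Phi -> Phi -> Phi) (e : Phi) (foc : Phi -> D -> Phi)
     (Gamma : Phi -> Prop),
     s_continuous_info_algebra comb e foc Gamma ->
     forall (phi : Phi) (x : D),
       directed comb
         (fun psi => Gamma psi /\ foc psi x = psi /\ way_below comb psi phi)) /\
  (forall (d : Order.disp_t) (D : tLatticeType d) (Phi : Type)
     (comb : Phi -> Phi -> Phi) (e : Phi) (foc : Phi -> D -> Phi)
     (Gamma : Phi -> Prop),
     continuous_info_algebra comb e foc Gamma ->
     forall phi : Phi,
       directed comb (fun psi => Gamma psi /\ way_below comb psi phi)).
Proof.
split.
- move=> d D Phi comb e foc Gamma [infoA [Gcomb Ge] _ _] phi x.
  apply: (info_directed_comb_closed infoA).
  + split=> //; split; [exact: foc_e infoA x | exact: info_way_below_e infoA phi].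
  + move=> a b [Ga [fa wa]] [Gb [fb wb]]; split; first exact: Gcomb.
    split; first exact: (foc_comb_fixed infoA fa fb).
    exact: (info_way_below_comb infoA wa wb).
- move=> d D Phi comb e foc Gamma [infoA [Gcomb Ge] _ _] phi.
  apply: (info_directed_comb_closed infoA).
  + by split; last exact: info_way_below_e infoA phi.
  + move=> a b [Ga wa] [Gb wb]; split; first exact: Gcomb.
    exact: (info_way_below_comb infoA wa wb).
Qed.
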